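(* Let $n\ge 1$ and $k\ge 2$ be integers, and let $A\subseteq\mathbb{Z}_{2n}$ with $|A|\ge n+k$. Then $\Sigma_k(A)=\mathbb{Z}_{2n}$.
   Context: For a finite set $A\subseteq\mathbb{Z}_m$ and an integer $1\le k\le |A|$, $\Sigma_k(A)$ (written $A\psi^{k-1}A$ in the paper) denotes the set of all elements of $\mathbb{Z}_m$ that can be written as a sum of $k$ distinct elements of $A$. *)

From mathcomp Require Import all_boot all_algebra.
Set Implicit Arguments. Unset Strict Implicit. Unset Printing Implicit Defensive.
Import GRing.Theory.
Local Open Scope ring_scope.

Definition restricted_sumset (G : finZmodType) (k : nat) (A : {set G}) : {set G} :=
  [set g : G | [exists B : {set G}, [&& B \subset A, #|B| == k & \sum_(x in B) x == g]]].

From mathcomp Require Import all_boot all_algebra zify.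
Import GRing.Theory.
Local Open Scope ring_scope.

(* Work in an arbitrary finite abelian group G and let t be the
   number of elements x with x + x = 0.
   - The solutions of x + x = g form either the empty set or a coset of this
     2-torsion subgroup, so there are at most t of them.
   - Pairs (k = 2): the involution x |-> g - x maps A to a set of the same
     size, so A meets its image in at least 2|A| - |G| points.  If
     2|A| > |G| + t, one of these points x is not a solution of x + x = g;
     then x and g - x are distinct elements of A summing to g.
   - Induction on k: if g - a is a sum of k distinct elements of A \ {a},
     then g is a sum of k + 1 distinct elements of A.  Each step costs one
     element of A, so |G| + t + 2(k - 2) < 2|A| gives Sigma_k(A) = G.
   In Z_(2n) the 2-torsion is {0, n}, so t <= 2 and |A| >= n + k suffices. *)

Section RestrictedSumsets.

Variable G : finZmodType.

Definition two_torsion : {set G} := [set x : G | x + x == 0].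

Lemma restricted_sumsetP (k : nat) (A : {set G}) (g : G) :
  reflect (exists2 B : {set G}, B \subset A & #|B| = k /\ \sum_(x in B) x = g)
          (g \in restricted_sumset k A).
Proof.
rewrite inE; apply: (iffP existsP) => [[B /and3P [BA /eqP cB /eqP sB]]|[B BA [cB sB]]].
  by exists B.
by exists B; rewrite BA cB sB !eqxx.
Qed.

Definition halves (g : G) : {set G} := [set x : G | x + x == g].

(* Translated by one of them, the halves of g lie in the 2-torsion;
   hence g has at most #|two_torsion| halves. *)
Lemma card_halves (g : G) : (#|halves g| <= #|two_torsion|)%N.
Proof.
set F := halves g.
have [->|[x0 Fx0]] := set_0Vmem F; first by rewrite cards0.
rewrite -(card_imset F (subIr x0)); apply: subset_leq_card.
apply/subsetP => _ /imsetP [x Fx ->]; move: Fx Fx0; rewrite !inE => /eqP Fx /eqP Fx0.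
by rewrite addrACA -opprD Fx Fx0 subrr.
Qed.

(* The pair case: a large set A represents every g as a sum of two distinct
   elements, via the involution x |-> g - x. *)
Lemma restricted_sumset2 (A : {set G}) (g : G) :
  (#|G| + #|two_torsion| < #|A| + #|A|)%N -> g \in restricted_sumset 2 A.
Proof.
move=> hA.
set rA := [set g - x | x in A].
have card_rA : #|rA| = #|A| by apply: card_imset => x y /addrI /oppr_inj.
have big_meet : (#|A| + #|A| <= #|G| + #|A :&: rA|)%N.
  by rewrite -{2}card_rA -cardsUI leq_add2r max_card.
apply/restricted_sumsetP.
have [x] : exists x, x \in (A :&: rA) :\: halves g.
  apply/set0Pn; rewrite -card_gt0 cardsD.
  have := card_halves g; have := subset_leq_card (subsetIr (A :&: rA) (halves g)); lia.
rewrite !inE => /andP [xg /andP [xA /imsetP [y yA def_x]]].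
have gxA : g - x \in A by rewrite def_x opprB addrC subrK.
exists [set x; g - x].
  by apply/subsetP => z; rewrite !inE => /orP [] /eqP ->.
have x_neq : x != g - x by apply: contra xg => /eqP {1}->; rewrite subrK.
by rewrite cards2 x_neq big_setU1 ?inE //= big_set1 addrC subrK.
Qed.

Lemma restricted_sumsetS (k : nat) (A : {set G}) (a h : G) :
  a \in A -> h \in restricted_sumset k (A :\ a) -> a + h \in restricted_sumset k.+1 A.
Proof.
move=> aA /restricted_sumsetP [B BA [cB sB]].
have aB : a \notin B by apply/negP => /(subsetP BA); rewrite !inE eqxx.
apply/restricted_sumsetP; exists (a |: B).
  by rewrite subUset sub1set aA (subset_trans BA) ?subD1set.
by rewrite cardsU1 aB cB big_setU1 //= sB.
Qed.

Lemma restricted_sumset_full (k : nat) (A : {set G}) :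
  (2 <= k)%N -> (#|G| + #|two_torsion| + (k - 2).*2 < #|A| + #|A|)%N ->
  restricted_sumset k A = setT.
Proof.
move=> hk hA; apply/setP => g; rewrite in_setT.
elim: k hk A hA g => [//|k IH] hk A hA g.
have [k1|k_neq1] := eqVneq k 1%N.
  by move: hA; rewrite k1 subnn addn0; apply: restricted_sumset2.
have [a aA] : exists a, a \in A.
  by apply/set0Pn; rewrite -card_gt0; move: hA; case: #|A|.
rewrite -[g](subrK a) addrC; apply: restricted_sumsetS => //; apply: IH; first lia.
by move: hA; rewrite (cardsD1 a A) aA -!addnn; lia.
Qed.

End RestrictedSumsets.

Lemma double_mod_eq0 {m d : nat} :
  (m < d)%N -> ((m + m) %% d = 0)%N -> m = 0%N \/ (m + m = d)%N.
Proof.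
move=> m_lt /eqP /dvdnP [q def_q].
have q_lt2 : (q < 2)%N by rewrite ltnNge; apply/negP => q_ge2; nia.
by case: q q_lt2 def_q => [|[|//]] _ def_q; [left|right]; lia.
Qed.

Lemma card_two_torsion_Z2n {n : nat} : (1 <= n)%N -> (#|two_torsion 'Z_(2 * n)| <= 2)%N.
Proof.
move=> hn; have hN : (Zp_trunc (2 * n)).+2 = (2 * n)%N by apply: Zp_cast; lia.
have n_lt : (n < (Zp_trunc (2 * n)).+2)%N by rewrite hN; lia.
apply: (@leq_trans #|[set 0; Ordinal n_lt]|); last by rewrite cards2; case: eqP.
apply: subset_leq_card; apply/subsetP => x; rewrite !inE -!val_eqE /=.
have := ltn_ord x; move: (nat_of_ord x) => m; rewrite hN => m_lt /eqP.
case/(double_mod_eq0 m_lt) => [->|m2]; rewrite ?eqxx //; apply/orP; right; apply/eqP; lia.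
Qed.

Theorem mainTheorem10 (n k : nat) (hn : (1 <= n)%N) (hk : (2 <= k)%N)
  (A : {set 'Z_(2 * n)}) (hA : (n + k <= #|A|)%N) :
  restricted_sumset k A = [set: 'Z_(2 * n)].
Proof.
apply: restricted_sumset_full => //.
have card_Z : #|'Z_(2 * n)| = (2 * n)%N by rewrite card_ord Zp_cast //; lia.
(* the goal mentions two_torsion through another (convertible) instance path
   for 'Z_(2 * n), so the bound is inserted by unification *)
apply: leq_ltn_trans (leq_add (leq_add (leqnn _) (card_two_torsion_Z2n hn)) (leqnn _)) _.
rewrite card_Z -addnn; apply: leq_trans (leq_add hA hA); lia.
Qed.
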